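(* Let $\mathcal{X}$ be $\mathbb{E}^2$ or $\mathbb{H}^2$ and let $M$ be a locally-finite map in $\mathcal{X}$ with exactly one end such that $V(M)$ is a locally finite collection of vertices. Suppose $G\le\mathrm{Isom}(\mathcal{X})$ acts quasi-transitively on $M$. Then $G$ is a discrete group of isometries of $\mathcal{X}$.
   Context: A map $M$ in a surface $X$ is a (simple, connected, infinite) graph embedded in $X$: vertices are distinct points, edges are curves meeting only at common endpoints, and each face (component of the complement) is homeomorphic to an open disc. $M$ is locally-finite / has one end if its underlying graph does (ends = equivalence classes of rays, two rays equivalent if joined by infinitely many disjoint paths). $V(M)$ is a locally finite collection of vertices if every compact subset of $\mathcal{X}$ contains only finitely many vertices of $M$. A group $G\le\mathrm{Isom}(\mathcal{X})$ acts on $M$ if each $g\in G$ maps $M$ to itself with $g(V(M))=V(M)$ inducing a graph automorphism; it acts quasi-transitively if it has finitely many orbits on $V(M)$. *)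

(* The surface X is modelled as a subset of R*R:
   E^2 = whole plane with Euclidean distance; H^2 = upper half-plane model
   with its hyperbolic distance. *)
From HB Require Import structures.
From mathcomp Require Import all_boot all_order all_algebra.
From mathcomp Require Import all_classical all_reals all_analysis.
Set Implicit Arguments. Unset Strict Implicit. Unset Printing Implicit Defensive.
Import Order.TTheory GRing.Theory Num.Theory.
Import numFieldNormedType.Exports.
Local Open Scope classical_set_scope.
Local Open Scope ring_scope.

Section Defs.
Variable R : realType.
Notation pt := (R * R)%type.

Inductive geom := Euclid | Hyperbolic.

Definition eucl (p q : pt) : R :=
  Num.sqrt ((p.1 - q.1) ^+ 2 + (p.2 - q.2) ^+ 2).

Definition carrier (X : geom) : set pt :=
  match X with Euclid => setT | Hyperbolic => [set p | 0 < p.2] end.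

Definition dist (X : geom) (p q : pt) : R :=
  match X with
  | Euclid => eucl p q
  | Hyperbolic =>
      let a := eucl p q in let b := eucl p (q.1, - q.2) in
      ln ((b + a) / (b - a))
  end.

Definition isometry (X : geom) (g : pt -> pt) : Prop :=
  [/\ forall x, carrier X x -> carrier X (g x),
      (forall y, carrier X y -> exists2 x, carrier X x & g x = y) &
      forall x y, carrier X x -> carrier X y -> dist X (g x) (g y) = dist X x y].

(** G is a subgroup of Isom(X); maps are identified when they agree on X. *)
Definition isom_subgroup (X : geom) (G : set (pt -> pt)) : Prop :=
  [/\ forall g, G g -> isometry X g,
      (exists2 e, G e & forall x, carrier X x -> e x = x),
      (forall g h, G g -> G h -> G (g \o h)) &
      forall g, G g -> exists2 h, G h & forall x, carrier X x -> h (g x) = x].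

(** G is discrete in the compact-open topology on Isom(X): the identity is
    isolated, i.e. some basic neighbourhood
    {g | sup_{x in K} d(g x, x) < eps}, K compact, contains only the identity. *)
Definition discrete_group (X : geom) (G : set (pt -> pt)) : Prop :=
  exists K : set pt, [/\ K `<=` carrier X, compact K &
    exists2 eps : R, 0 < eps &
      forall g, G g -> (forall x, K x -> dist X (g x) x < eps) ->
        forall x, carrier X x -> g x = x].

Definition gpath (V : set pt) (adj : pt -> pt -> Prop) (s : seq pt) : Prop :=
  s <> [::] /\ (forall i, (i < size s)%N -> V (nth (0,0) s i)) /\
  (forall i, (i.+1 < size s)%N -> adj (nth (0,0) s i) (nth (0,0) s i.+1)).

Definition ray (V : set pt) (adj : pt -> pt -> Prop) (r : nat -> pt) : Prop :=
  injective r /\ (forall n, V (r n)) /\ (forall n, adj (r n) (r n.+1)).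

Definition equiv_rays (V : set pt) (adj : pt -> pt -> Prop) (r1 r2 : nat -> pt) :=
  exists P : nat -> seq pt,
    (forall k, gpath V adj (P k) /\ range r1 (head (0,0) (P k))
                /\ range r2 (last (0,0) (P k))) /\
    (forall k l, k <> l -> forall x, x \in P k -> x \notin P l).

Definition one_ended (V : set pt) (adj : pt -> pt -> Prop) : Prop :=
  (exists r, ray V adj r) /\
  (forall r1 r2, ray V adj r1 -> ray V adj r2 -> equiv_rays V adj r1 r2).

Definition locally_finite_graph (V : set pt) (adj : pt -> pt -> Prop) :=
  forall v, V v -> finite_set [set u | adj v u].

Definition simple_conn_inf_graph (V : set pt) (adj : pt -> pt -> Prop) :=
  [/\ forall u v, adj u v -> V u /\ V v,
      forall u v, adj u v -> adj v u,
      forall u, ~ adj u u,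
      forall u v, V u -> V v -> exists s, gpath V adj s /\
                  head (0,0) s = u /\ last (0,0) s = v &
      ~ finite_set V].

Definition arc (X : geom) (A : set pt) (u v : pt) : Prop :=
  exists gam : R -> pt,
    [/\ {within `[0, 1], continuous gam},
        {in `[0, 1] &, injective gam},
        gam 0 = u /\ gam 1 = v,
        gam @` `[0, 1] = A & A `<=` carrier X].

Definition open_disc : set pt := [set p | p.1 ^+ 2 + p.2 ^+ 2 < 1].

Definition homeomorphic_to_disc (F : set pt) : Prop :=
  exists (phi psi : pt -> pt),
    [/\ forall x, F x -> open_disc (phi x),
        forall y, open_disc y -> F (psi y),
        forall x, F x -> psi (phi x) = x &
        forall y, open_disc y -> phi (psi y) = y] /\
    ({within F, continuous phi} /\ {within open_disc, continuous psi}).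

Definition map_points (V : set pt) (adj : pt -> pt -> Prop)
    (E : pt -> pt -> set pt) : set pt :=
  V `|` [set x | exists u v, adj u v /\ E u v x].

(** M = (V, adj, E) is a map in X: E u v is the image of the edge uv. *)
Definition is_map (X : geom) (V : set pt) (adj : pt -> pt -> Prop)
    (E : pt -> pt -> set pt) : Prop :=
  [/\ simple_conn_inf_graph V adj,
      V `<=` carrier X,
      (forall u v, adj u v -> E u v = E v u /\ arc X (E u v) u v),
      ((forall u v w, adj u v -> V w -> E u v w -> w = u \/ w = v) /\
      (forall u v u' v', adj u v -> adj u' v' -> ~ ([set u; v] = [set u'; v']) ->
         forall x, E u v x -> E u' v' x ->
           (x = u \/ x = v) /\ (x = u' \/ x = v'))) &
      forall x, (carrier X `\` map_points V adj E) x ->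
        homeomorphic_to_disc
          (connected_component (carrier X `\` map_points V adj E) x)].

Definition locally_finite_vertices (X : geom) (V : set pt) : Prop :=
  forall K : set pt, K `<=` carrier X -> compact K -> finite_set (K `&` V).

Definition acts_on (G : set (pt -> pt)) (V : set pt) (adj : pt -> pt -> Prop)
    (E : pt -> pt -> set pt) : Prop :=
  forall g, G g ->
    [/\ g @` V = V,
        (forall u v, V u -> V v -> (adj u v <-> adj (g u) (g v))) &
        (forall u v, adj u v -> g @` E u v = E (g u) (g v))].

Definition quasi_transitive (G : set (pt -> pt)) (V : set pt) : Prop :=
  exists reps : seq pt, forall v, V v ->
    exists2 w, w \in reps & exists2 g, G g & g w = v.

End Defs.

(* An infinite, locally finite vertex set contains two distinct vertices v1, v2,
   each isolated among the vertices; pick u off the geodesic through v1 and v2.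
   An element of G moving v1, v2 and u by less than some eps must fix v1 and v2,
   since it permutes the vertices; it then maps u to u or to the mirror image of u
   in that geodesic, which is far from u, so it fixes u too. An isometry fixing
   three non-collinear points is the identity, so {v1, v2, u} and eps witness
   that G is discrete. *)

From Pilot Require Import Defs.
From mathcomp Require Import all_boot all_order all_algebra.
From mathcomp Require Import all_classical all_reals all_analysis.
From mathcomp Require Import ring lra.
Set Implicit Arguments. Unset Strict Implicit. Unset Printing Implicit Defensive.
Import Order.TTheory GRing.Theory Num.Theory.
Local Open Scope classical_set_scope.
Local Open Scope ring_scope.

Section PlaneAlgebra.
Variable R : realFieldType.

Lemma affine_eq0_at_triangle (A B C q1 q2 q3 r1 r2 r3 : R) :
  (q2 - q1) * (r3 - r1) - (q3 - q1) * (r2 - r1) != 0 ->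
  A + B * q1 + C * r1 = 0 -> A + B * q2 + C * r2 = 0 -> A + B * q3 + C * r3 = 0 ->
  B = 0 /\ C = 0.
Proof.
set det := (X in X != 0) => /negPf det0 e1 e2 e3.
have hB : B * det = (r3 - r1) * ((A + B * q2 + C * r2) - (A + B * q1 + C * r1))
                  - (r2 - r1) * ((A + B * q3 + C * r3) - (A + B * q1 + C * r1)).
  by rewrite /det; ring.
have hC : C * det = (q2 - q1) * ((A + B * q3 + C * r3) - (A + B * q1 + C * r1))
                  - (q3 - q1) * ((A + B * q2 + C * r2) - (A + B * q1 + C * r1)).
  by rewrite /det; ring.
rewrite e1 e2 e3 subrr !mulr0 subrr in hB hC.
split; apply/eqP.
  by move/eqP: hB; rewrite mulf_eq0 det0 orbF.
by move/eqP: hC; rewrite mulf_eq0 det0 orbF.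
Qed.

(* Two circles through the origin whose centres are not collinear with the origin
   meet in exactly one further point; its squared norm [n] is pinned down by
   [(al n)^2 |e - c|^2 = (c1 e2 - c2 e1)^2 n], from Lagrange's identity. *)
Lemma circles_through0_isolated (al c1 c2 e1 e2 : R) :
  0 < al -> c1 * e2 - c2 * e1 != 0 ->
  exists2 de : R, 0 < de & forall d1 d2,
    al * (d1 ^+ 2 + d2 ^+ 2) + (c1 * d1 + c2 * d2) = 0 ->
    al * (d1 ^+ 2 + d2 ^+ 2) + (e1 * d1 + e2 * d2) = 0 ->
    d1 ^+ 2 + d2 ^+ 2 < de -> d1 = 0 /\ d2 = 0.
Proof.
set k := c1 * e2 - c2 * e1; set m := (e1 - c1) ^+ 2 + (e2 - c2) ^+ 2.
move=> al0 k0.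
have m0 : 0 <= m by rewrite addr_ge0 ?sqr_ge0.
have den0 : 0 < al ^+ 2 * (m + 1) by rewrite mulr_gt0 ?exprn_gt0 // ltr_wpDl.
exists (k ^+ 2 / (al ^+ 2 * (m + 1))).
  by rewrite divr_gt0 // exprn_even_gt0 //= ?k0.
move=> d1 d2 hc he; set n := d1 ^+ 2 + d2 ^+ 2 => small.
have lagrange : ((c1 * d1 + c2 * d2) * e1 - (e1 * d1 + e2 * d2) * c1) ^+ 2
              + ((c1 * d1 + c2 * d2) * e2 - (e1 * d1 + e2 * d2) * c2) ^+ 2 = k ^+ 2 * n.
  by rewrite /k /n; ring.
have hcd : c1 * d1 + c2 * d2 = - (al * n) by apply/eqP; rewrite -addr_eq0 addrC hc.
have hed : e1 * d1 + e2 * d2 = - (al * n) by apply/eqP; rewrite -addr_eq0 addrC he.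
have second : (al * n) ^+ 2 * m = k ^+ 2 * n by rewrite -lagrange hcd hed /m; ring.
have n0 : n = 0.
  rewrite ltr_pdivlMr // in small.
  have n_ge0 : 0 <= n by rewrite addr_ge0 ?sqr_ge0.
  nra.
by move/eqP: n0; rewrite paddr_eq0 ?sqr_ge0 // !sqrf_eq0 => /andP[/eqP -> /eqP ->].
Qed.

End PlaneAlgebra.

Section Geometry.
Variable R : realType.
Notation pt := (R * R)%type.
Implicit Types (p q x y u a b v w : pt).

Definition sqdist p q : R := (p.1 - q.1) ^+ 2 + (p.2 - q.2) ^+ 2.

Lemma sqdist_ge0 p q : 0 <= sqdist p q.
Proof. by rewrite addr_ge0 ?sqr_ge0. Qed.

Lemma sqdist_eq0 p q : sqdist p q = 0 -> p = q.
Proof.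
move/eqP; rewrite paddr_eq0 ?sqr_ge0 // !sqrf_eq0 !subr_eq0 => /andP[/eqP e1 /eqP e2].
by move: p q e1 e2 => [? ?] [? ?] /= -> ->.
Qed.

Lemma sqr_eucl p q : eucl p q ^+ 2 = sqdist p q.
Proof. by rewrite sqr_sqrtr // sqdist_ge0. Qed.

Lemma eucl_ge0 p q : 0 <= eucl p q.
Proof. exact: sqrtr_ge0. Qed.

Lemma eucl_gt0 p q : p <> q -> 0 < eucl p q.
Proof.
by move=> pq; rewrite sqrtr_gt0 lt_def sqdist_ge0 andbT; apply/eqP => /sqdist_eq0.
Qed.

Lemma eucl_lt_sqrt p q (de : R) : 0 < de -> (eucl p q < Num.sqrt de) = (sqdist p q < de).
Proof. by move=> de0; rewrite ltr_sqrt. Qed.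

Lemma sqr_eucl_reflect p q :
  eucl p (q.1, - q.2) ^+ 2 = eucl p q ^+ 2 + 4 * p.2 * q.2.
Proof. by rewrite !sqr_eucl /sqdist /=; ring. Qed.

Lemma eucl_lt_reflect p q : 0 < p.2 -> 0 < q.2 -> eucl p q < eucl p (q.1, - q.2).
Proof.
move=> p0 q0; rewrite -(ltr_pXn2r (n := 2)) ?nnegrE ?eucl_ge0 //.
by rewrite sqr_eucl_reflect ltrDl !mulr_gt0.
Qed.

Lemma hdist_eq_sqdist x y p : 0 < x.2 -> 0 < y.2 -> 0 < p.2 ->
  dist Hyperbolic y p = dist Hyperbolic x p -> sqdist y p * x.2 = sqdist x p * y.2.
Proof.
move=> x0 y0 p0 /=; rewrite -!sqr_eucl.
have [hb hb'] := (sqr_eucl_reflect y p, sqr_eucl_reflect x p).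
have [ab a'b'] := (eucl_lt_reflect y0 p0, eucl_lt_reflect x0 p0).
have [a0 a'0] := (eucl_ge0 y p, eucl_ge0 x p).
move: hb hb' ab a'b' a0 a'0.
set a := eucl y p; set b := eucl y _; set a' := eucl x p; set b' := eucl x _.
move=> hb hb' ab a'b' a0 a'0.
have pos : 0 < (b + a) / (b - a) /\ 0 < (b' + a') / (b' - a').
  by split; apply: divr_gt0; lra.
move=> /ln_inj; rewrite !posrE => /(_ pos.1 pos.2) /eqP.
have [ba b'a'] : b - a != 0 /\ b' - a' != 0 by split; rewrite subr_eq0 gt_eqF.
rewrite eqr_div // => /eqP cross.
have ab_ratio : a * b' = a' * b by lra.
have : a ^+ 2 * b' ^+ 2 = a' ^+ 2 * b ^+ 2 by rewrite -!exprMn ab_ratio.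
rewrite hb hb' => sq.
apply: (mulIf (_ : 4 * p.2 != 0)); first by rewrite mulf_neq0 ?gt_eqF.
nra.
Qed.

Lemma ln_le_hdist p q : 0 < p.2 -> 0 < q.2 ->
  ln (1 + eucl p q / q.2) <= dist Hyperbolic p q.
Proof.
move=> p0 q0 /=.
have := eucl_lt_reflect p0 q0; have := sqr_eucl_reflect p q; have := eucl_ge0 p q.
have := sqr_eucl p q.
set a := eucl p q; set b := eucl p _ => a_sq a0 hb ab.
have a_ge : p.2 - q.2 <= a.
  have : (p.2 - q.2) ^+ 2 <= a ^+ 2 by rewrite a_sq lerDr sqr_ge0.
  nra.
have b_le : b - a <= 2 * q.2 by nra.
set t := a / q.2.
have t0 : 0 <= t by rewrite divr_ge0 // ltW.
have ta : t * q.2 = a by rewrite divfK ?gt_eqF.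
have pos : 0 < (b + a) / (b - a) by apply: divr_gt0; lra.
rewrite ler_ln ?posrE ?ltr_wpDr // ?ler_pdivlMr ?subr_gt0 //.
nra.
Qed.

Lemma eucl_lt_of_dist_lt X q : carrier X q -> forall r : R, 0 < r ->
  exists2 eps : R, 0 < eps &
    forall p, carrier X p -> dist X p q < eps -> eucl p q < r.
Proof.
case: X => /= q0 r r0; first by exists r.
exists (ln (1 + r / q.2)); first by rewrite ln_gt0 // ltrDl divr_gt0.
move=> p p0 /(le_lt_trans (ln_le_hdist p0 q0)).
have pos s : 0 <= s -> 0 < 1 + s / q.2.
  by move=> s0; rewrite ltr_wpDr // divr_ge0 // ltW.
rewrite ltr_ln ?posrE ?pos ?eucl_ge0 // ?ltW // ltrD2l.
by rewrite ltr_pM2r ?invr_gt0.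
Qed.

Lemma seq_eucl_gap (s : seq pt) v :
  exists2 r : R, 0 < r & forall w, w \in s -> w <> v -> r <= eucl w v.
Proof.
elim: s => [|x s [r r0 gap]]; first by exists 1.
have [->|/eqP xv] := eqVneq x v.
  by exists r => // w; rewrite inE => /orP[/eqP -> //|]; apply: gap.
exists (Num.min r (eucl x v)); first by rewrite lt_min r0 eucl_gt0.
move=> w; rewrite inE ge_min => /orP[/eqP -> _|ws wv]; first by rewrite lexx orbT.
by rewrite gap.
Qed.

Lemma vertex_isolated X (V : set pt) v :
  locally_finite_vertices X V -> V `<=` carrier X -> V v ->
  exists2 eps : R, 0 < eps & forall w, V w -> dist X w v < eps -> w = v.
Proof.
move=> lfV VX Vv.
have [r0 r0_gt0 boxX] : exists2 r0 : R, 0 < r0 &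
    `[v.1 - r0, v.1 + r0] `*` `[v.2 - r0, v.2 + r0] `<=` carrier X.
  case: X lfV VX => lfV VX; first by exists 1.
  have v0 : 0 < v.2 := VX _ Vv.
  exists (v.2 / 2) => [|p [_ /=]]; first by rewrite divr_gt0.
  by rewrite in_itv /= => /andP[lo _]; rewrite /carrier /=; lra.
set box := _ `*` _ in boxX.
have box_compact : compact box by apply: compact_setX; apply: segment_compact.
have [s box_s] := iffLR (finite_seqP _) (lfV _ boxX box_compact).
have [r1 r1_gt0 gap] := seq_eucl_gap s v.
have r_gt0 : 0 < Num.min r0 r1 by rewrite lt_min r0_gt0.
have [eps eps_gt0 eucl_near] := eucl_lt_of_dist_lt (VX _ Vv) r_gt0.
exists eps => // w Vw /(eucl_near _ (VX _ Vw)); rewrite lt_min => /andP[near0 near1].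
have w_box : box w.
  have : sqdist w v < r0 ^+ 2 by rewrite -sqr_eucl ltr_pXn2r ?nnegrE ?eucl_ge0 ?ltW.
  rewrite /sqdist => sq_near.
  have near_x : (w.1 - v.1) ^+ 2 < r0 ^+ 2 by apply: le_lt_trans sq_near; rewrite lerDl sqr_ge0.
  have near_y : (w.2 - v.2) ^+ 2 < r0 ^+ 2 by apply: le_lt_trans sq_near; rewrite lerDr sqr_ge0.
  by split; rewrite /= in_itv /=; apply/andP; split; nra.
have ws : w \in s by have : [set` s] w by rewrite -box_s.
have [//|wv] := pselect (w = v).
by move: (gap w ws wv); rewrite leNgt near1.
Qed.

Definition weight X p : R := if X is Hyperbolic then p.2 else 1.

(* An algebraic form of d(y, p) = d(x, p); for H^2 it comes from
   cosh d(x, p) = 1 + |x - p|^2 / (2 x.2 p.2). *)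
Definition equidistant X p x y : Prop :=
  sqdist y p * weight X x = sqdist x p * weight X y.

Lemma weight_gt0 X p : carrier X p -> 0 < weight X p.
Proof. by case: X. Qed.

Lemma dist_eq_equidistant X p x y : carrier X x -> carrier X y -> carrier X p ->
  dist X y p = dist X x p -> equidistant X p x y.
Proof.
case: X => [_ _ _ /= e|]; last exact: hdist_eq_sqdist.
by rewrite /equidistant /= !mulr1 -!sqr_eucl e.
Qed.

(* The geodesics of X (lines, resp. vertical lines and half-circles centred on
   the real axis) are the curves A + B p.1 + C (geodesic_coord X p) = 0, so
   [collinear X a b u] says that a, b and u lie on one geodesic. *)
Definition geodesic_coord X p : R :=
  if X is Hyperbolic then p.1 ^+ 2 + p.2 ^+ 2 else p.2.

Definition collinear X a b u : bool :=
  (b.1 - a.1) * (geodesic_coord X u - geodesic_coord X a)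
    - (u.1 - a.1) * (geodesic_coord X b - geodesic_coord X a) == 0.

Lemma bisector_geodesic X x y : carrier X x -> exists A B C : R,
  (forall p, equidistant X p x y -> A + B * p.1 + C * geodesic_coord X p = 0) /\
  (B = 0 -> C = 0 -> y = x).
Proof.
case: X => /= x0.
  exists ((y.1 ^+ 2 + y.2 ^+ 2) - (x.1 ^+ 2 + x.2 ^+ 2)), (-2 * (y.1 - x.1)), (-2 * (y.2 - x.2)).
  split=> [p /eqP|/eqP B0 /eqP C0].
    by rewrite -subr_eq0 => /eqP <-; rewrite /sqdist /=; ring.
  move: B0 C0; rewrite !mulf_eq0 oppr_eq0 pnatr_eq0 /= !subr_eq0 => /eqP e1 /eqP e2.
  by apply/pair_eqP; rewrite /= e1 e2 !eqxx.
exists (x.2 * (y.1 ^+ 2 + y.2 ^+ 2) - y.2 * (x.1 ^+ 2 + x.2 ^+ 2)),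
  (-2 * (x.2 * y.1 - y.2 * x.1)), (x.2 - y.2).
split=> [p /eqP|B0 /eqP C0].
  by rewrite -subr_eq0 => /eqP <-; rewrite /sqdist /=; ring.
move: C0; rewrite subr_eq0 => /eqP e2.
move: B0; rewrite -e2 -mulrBr => /eqP; rewrite !mulf_eq0 oppr_eq0 pnatr_eq0 (gt_eqF x0) /= subr_eq0.
by move=> /eqP e1; apply/pair_eqP; rewrite /= e1 e2 !eqxx.
Qed.

Lemma equidistant3_eq X a b u x y : carrier X x -> ~~ collinear X a b u ->
  equidistant X a x y -> equidistant X b x y -> equidistant X u x y -> y = x.
Proof.
move=> Xx ncol ea eb eu.
have [A [B [C [bisector degenerate]]]] := bisector_geodesic y Xx.
have [B0 C0] := affine_eq0_at_triangle ncol (bisector _ ea) (bisector _ eb) (bisector _ eu).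
exact: degenerate B0 C0.
Qed.

Definition circle_coef X u p : R * R :=
  (2 * weight X u * (u.1 - p.1),
   2 * weight X u * (u.2 - p.2) - (if X is Hyperbolic then sqdist u p else 0)).

Lemma equidistant_circle X p u y : equidistant X p u y ->
  weight X u * sqdist y u
    + ((circle_coef X u p).1 * (y.1 - u.1) + (circle_coef X u p).2 * (y.2 - u.2)) = 0.
Proof.
move=> e; transitivity (sqdist y p * weight X u - sqdist u p * weight X y).
  by case: X {e}; rewrite /= /sqdist; ring.
by rewrite e subrr.
Qed.

Lemma circle_coef_cross X a b u : carrier X u -> ~~ collinear X a b u ->
  (circle_coef X u a).1 * (circle_coef X u b).2
    - (circle_coef X u a).2 * (circle_coef X u b).1 != 0.
Proof.
rewrite /collinear; set det := (X in X == 0) => u0 det0.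
have -> : (circle_coef X u a).1 * (circle_coef X u b).2
    - (circle_coef X u a).2 * (circle_coef X u b).1
    = 2 * weight X u * (if X is Hyperbolic then 1 else 2) * det.
  by rewrite /det; case: X {u0 det0 det}; rewrite /= /sqdist /geodesic_coord /=; ring.
have k0 : (if X is Hyperbolic then 1 else 2) != 0 :> R by case: (X); rewrite ?pnatr_eq0.
by rewrite !mulf_neq0 // ?pnatr_eq0 // gt_eqF // weight_gt0.
Qed.

Lemma equidistant2_isolated X a b u : carrier X u -> ~~ collinear X a b u ->
  exists2 r : R, 0 < r & forall y,
    equidistant X a u y -> equidistant X b u y -> eucl y u < r -> y = u.
Proof.
move=> Xu ncol.
have [de de0 isolated] := circles_through0_isolated (weight_gt0 Xu) (circle_coef_cross Xu ncol).
exists (Num.sqrt de) => [|y ea eb]; first by rewrite sqrtr_gt0.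
rewrite eucl_lt_sqrt // => near.
have [e1 e2] := isolated _ _ (equidistant_circle ea) (equidistant_circle eb) near.
move/eqP: e1; move/eqP: e2; rewrite !subr_eq0 => /eqP e2 /eqP e1.
by apply/pair_eqP; rewrite /= e1 e2 !eqxx.
Qed.

Lemma exists_noncollinear X a b : carrier X a -> carrier X b -> a <> b ->
  exists u, carrier X u /\ ~~ collinear X a b u.
Proof.
move=> Xa Xb ab; rewrite /collinear.
case: X Xa Xb => /= a0 b0.
  have ba0 : 0 < sqdist b a by rewrite -sqr_eucl exprn_gt0 // (eucl_gt0 (nesym ab)).
  exists (a.1 - (b.2 - a.2), a.2 + (b.1 - a.1)); split => //=.
  set det := (X in X == 0); have -> : det = sqdist b a by rewrite /det /sqdist; ring.
  by rewrite gt_eqF.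
have [e1|ne1] := eqVneq a.1 b.1.
  have ne2 : a.2 != b.2 by apply: contra_notN ab => /eqP e2; apply/pair_eqP; rewrite /= e1 e2 !eqxx.
  exists (a.1 + 1, a.2); split => //=.
  set det := (X in X == 0); have -> : det = (a.2 - b.2) * (a.2 + b.2) by rewrite /det -e1; ring.
  by rewrite mulf_neq0 ?subr_eq0 // gt_eqF ?addr_gt0.
exists (a.1, 2 * a.2); split => /=; first by rewrite mulr_gt0.
set det := (X in X == 0); have -> : det = 3 * a.2 ^+ 2 * (b.1 - a.1) by rewrite /det; ring.
by rewrite !mulf_neq0 ?pnatr_eq0 ?expf_neq0 ?(gt_eqF a0) // subr_eq0 eq_sym.
Qed.

Lemma isometry_equidistant X g p x : Defs.isometry X g -> carrier X p -> carrier X x ->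
  g p = p -> equidistant X p x (g x).
Proof.
move=> [gX _ g_dist] Xp Xx gp.
apply: dist_eq_equidistant => //; first exact: gX.
by rewrite -{1}gp g_dist.
Qed.

Lemma isometry_fix_noncollinear X g a b u : Defs.isometry X g ->
  carrier X a -> carrier X b -> carrier X u -> ~~ collinear X a b u ->
  g a = a -> g b = b -> g u = u -> forall x, carrier X x -> g x = x.
Proof.
move=> g_isom Xa Xb Xu ncol ga gb gu x Xx.
by apply: (equidistant3_eq Xx ncol); apply: isometry_equidistant.
Qed.

Lemma isometry_fix2_isolated X a b u :
  carrier X a -> carrier X b -> carrier X u -> ~~ collinear X a b u ->
  exists2 eps : R, 0 < eps & forall g, Defs.isometry X g -> g a = a -> g b = b ->
    dist X (g u) u < eps -> g u = u.
Proof.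
move=> Xa Xb Xu ncol.
have [r r_gt0 isolated] := equidistant2_isolated Xu ncol.
have [eps eps_gt0 near] := eucl_lt_of_dist_lt Xu r_gt0.
exists eps => // g g_isom ga gb close.
have gXu : carrier X (g u) by case: g_isom => gX _ _; apply: gX.
by apply: isolated; [apply: isometry_equidistant.. | apply: near].
Qed.

End Geometry.

Theorem lemma2p4 (R : realType) (X : geom) (V : set (R * R)%type)
    (adj : (R * R)%type -> (R * R)%type -> Prop)
    (E : (R * R)%type -> (R * R)%type -> set (R * R)%type)
    (G : set ((R * R)%type -> (R * R)%type)) :
  is_map X V adj E ->
  locally_finite_graph V adj ->
  one_ended V adj ->
  locally_finite_vertices X V ->
  isom_subgroup X G ->
  acts_on G V adj E ->
  quasi_transitive G V ->
  discrete_group X G.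
Proof.
move=> [[_ _ _ _ infV] VX _ _ _] _ _ lfV [G_isom _ _ _] G_act _.
have [v1 Vv1] := infinite_setN0 infV.
have [v2 [Vv2 v21]] := infinite_setN0 (infinite_setD infV (finite_set1 v1)).
have [Xv1 Xv2] := (VX _ Vv1, VX _ Vv2).
have [u [Xu ncol]] := exists_noncollinear Xv1 Xv2 (nesym v21).
have [e1 e1_gt0 fix1] := vertex_isolated lfV VX Vv1.
have [e2 e2_gt0 fix2] := vertex_isolated lfV VX Vv2.
have [e3 e3_gt0 fix3] := isometry_fix2_isolated Xv1 Xv2 Xu ncol.
have G_V g v : G g -> V v -> V (g v).
  by move=> Gg Vv; have [<- _ _] := G_act g Gg; exists v.
exists [set v1; v2; u]; split.
- by move=> x [[->|->]|->].
- by apply: compactU; [apply: compactU|]; apply: compact_set1.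
exists (Num.min e1 (Num.min e2 e3)); first by rewrite !lt_min e1_gt0 e2_gt0 e3_gt0.
move=> g Gg near; have g_isom := G_isom g Gg.
have := near v1 (or_introl (or_introl erefl)); rewrite lt_min => /andP[near1 _].
have := near v2 (or_introl (or_intror erefl)); rewrite !lt_min => /and3P[_ near2 _].
have := near u (or_intror erefl); rewrite !lt_min => /and3P[_ _ near3].
have gv1 : g v1 = v1 by apply: fix1 (G_V _ _ Gg Vv1) near1.
have gv2 : g v2 = v2 by apply: fix2 (G_V _ _ Gg Vv2) near2.
exact: isometry_fix_noncollinear g_isom Xv1 Xv2 Xu ncol gv1 gv2 (fix3 g g_isom gv1 gv2 near3).
Qed.
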